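(* Let $(S,* )$ be a finite cycle set with structure monoid $M$ and permutation group $\mathcal G$. Then there is a (unique) binary operation $+$ on $\mathcal G$ such that $\psi(g+h)=\psi(g)+\psi(h)$ for all $g,h\in M$, and $(\mathcal G,+)$ is an abelian group; i.e. the commutative structure $(M,+)$ induces an abelian group structure on $\mathcal G$ compatible with $\psi\colon M\to\mathcal G$.
   Context: A cycle set is a set $S$ with a binary operation $*$ such that each $t\mapsto s*t$ is bijective and $(s*t)*(s*u)=(t*s)*(t*u)$ for all $s,t,u$. Write $S=\{s_1,\dots,s_n\}$, let $\psi(s)\in\mathfrak S_n$ satisfy $s_i*s_j=s_{\psi(s_i)(j)}$, and $\mathcal G=\langle\psi(s_1),\dots,\psi(s_n)\rangle\le\mathfrak S_n$. The structure group $G$ (resp. monoid $M$) has group (resp. monoid) presentation $\langle S\mid s(s*t)=t(t*s),\ s\neq t\rangle$; $M$ embeds in $G$. For $\sigma\in\mathfrak S_n$, $P_\sigma$ is the matrix with $1$ at $(i,\sigma(i))$. The assignment $s_i\mapsto\mathrm{diag}(1,\dots,q,\dots,1)P_{\psi(s_i)}$ ($q$ an indeterminate, in position $i$) extends to a faithful representation $\Theta$ of $G$ by monomial matrices; write $\Theta(g)=D_gP_{\psi(g)}$ with $D_g=\mathrm{diag}(q^{c_1},\dots,q^{c_n})$, which defines $\psi(g)\in\mathcal G$ (so $\psi(gh)=\psi(h)\circ\psi(g)$). The map $g\mapsto(c_1,\dots,c_n)$ is a bijection $G\to\mathbb Z^n$ restricting to a bijection $M\to\mathbb N^n$. For $g,h\in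 G$, $g+h$ denotes the unique element of $G$ with $D_{g+h}=D_gD_h$; $(G,+)$ is an abelian group and $M$ is closed under $+$. *)

From HB Require Import structures.
From mathcomp Require Import all_boot all_fingroup.
Set Implicit Arguments. Unset Strict Implicit. Unset Printing Implicit Defensive.
Local Open Scope group_scope.

Record cycleSet (S : finType) := CycleSet {
  cop : S -> S -> S;
  cop_bij : forall s, bijective (cop s);
  cop_cycle : forall s t u, cop (cop s t) (cop s u) = cop (cop t s) (cop t u)
}.

Definition psi (S : finType) (C : cycleSet S) (s : S) : {perm S} :=
  perm (bij_inj (cop_bij C s)).

Definition permGroup (S : finType) (C : cycleSet S) : {set {perm S}} :=
  <<[set psi C s | s : S]>>.

(* Monomial matrices D_c P_sigma, D_c = diag(q^{c_i}), P_sigma with 1 at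
   (i, sigma i), are encoded as pairs (c, sigma).  Product:
   D_a P_s * D_b P_t = D_{i |-> a i + b (s i)} P_{t o s};
   in mathcomp, (s * t) x = t (s x), so t o s is the perm s * t. *)
Definition mono_mul (S : finType) (x y : {ffun S -> nat} * {perm S}) :=
  ([ffun i => x.1 i + y.1 (x.2 i)], x.2 * y.2).

(* Theta(s) = diag(1,..,q,..,1) P_{psi s}  (q in position s). *)
Definition theta_gen (S : finType) (C : cycleSet S) (s : S) :=
  ([ffun i => (i == s) : nat], psi C s).

(* Theta of a word s_1 ... s_k, i.e. of an element of the structure monoid M
   (every element of M is the image of such a word). *)
Fixpoint theta (S : finType) (C : cycleSet S) (w : seq S)
  : {ffun S -> nat} * {perm S} :=
  match w with
  | [::] => ([ffun _ => 0%N], 1)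
  | s :: w' => mono_mul (theta_gen C s) (theta C w')
  end.

Definition expv (S : finType) (C : cycleSet S) (w : seq S) := (theta C w).1.
Definition psiM (S : finType) (C : cycleSet S) (w : seq S) := (theta C w).2.

(* w represents g + h when D_w = D_u D_v, i.e. exponent vectors add. *)
Definition is_sum (S : finType) (C : cycleSet S) (u v w : seq S) :=
  expv C w = [ffun i => expv C u i + expv C v i].

Definition psi_compatible (S : finType) (C : cycleSet S)
  (add : {perm S} -> {perm S} -> {perm S}) :=
  forall u v w : seq S, is_sum C u v w -> psiM C w = add (psiM C u) (psiM C v).

Definition abelian_group_on (T : Type) (A : T -> Prop) (add : T -> T -> T) :=
  [/\ forall x y, A x -> A y -> A (add x y),
      forall x y z, A x -> A y -> A z -> add x (add y z) = add (add x y) z,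
      forall x y, A x -> A y -> add x y = add y x
    & exists2 e, A e &
        (forall x, A x -> add e x = x) /\
        (forall x, A x -> exists2 y, A y & add x y = e)].

From mathcomp Require Import all_boot all_fingroup.
Set Implicit Arguments. Unset Strict Implicit. Unset Printing Implicit Defensive.

(* The exponent vector of Theta(w) determines psi(w).  For two
   words with equal vectors one argues by induction on the length; when their
   first letters s <> t differ, the cycle-set relation s (s*t) = t (t*s) lets
   both words be rewritten with the common prefix s (s*t).  Writing psiV a for
   psi of the monoid element with vector a, the cocycle rule
   Theta(uv) = Theta(u) Theta(v) gives psiV (a + b) = psiV a * psiV (b o psiV a^-1),
   so psiV (a + b) depends on a only through psiV a, hence by commutativity
   only on psiV a and psiV b.  This defines + on G, and the group laws are
   inherited from (N^S, +); the inverse of psiV a is psiV (b o psiV a) for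
   any b with psiV b = (psiV a)^-1. *)

Local Open Scope group_scope.

Section CycleSetSum.

Variables (S : finType) (C : cycleSet S).
Implicit Types (a b c : {ffun S -> nat}) (g : {perm S}).

Local Notation expv := (expv C).
Local Notation psiM := (psiM C).

Lemma psiE s t : psi C s t = cop C s t.
Proof. by rewrite permE. Qed.

Lemma psiM_nil : psiM [::] = 1.
Proof. by []. Qed.

Lemma psiM_cons s w : psiM (s :: w) = psi C s * psiM w.
Proof. by []. Qed.

Lemma expv_cons s w : expv (s :: w) = [ffun i => (i == s) + expv w (psi C s i)].
Proof. by apply/ffunP => i; rewrite !ffunE. Qed.

Lemma expv_cat u v : expv (u ++ v) = [ffun i => expv u i + expv v (psiM u i)].
Proof.
elim: u => [|s u IHu]; apply/ffunP => i; first by rewrite !ffunE perm1.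
by rewrite cat_cons !expv_cons !ffunE IHu ffunE psiM_cons permM addnA.
Qed.

Lemma psiM_cat u v : psiM (u ++ v) = psiM u * psiM v.
Proof. by elim: u => [|s u IHu]; rewrite ?mul1g //= !psiM_cons IHu mulgA. Qed.

Lemma expv_cat_eq p q u v :
  expv p = expv q -> psiM p = psiM q -> expv u = expv v ->
  expv (p ++ u) = expv (q ++ v).
Proof. by rewrite !expv_cat => -> -> ->. Qed.

Lemma expv_catl_inj p u v : expv (p ++ u) = expv (p ++ v) -> expv u = expv v.
Proof.
move=> E; apply/ffunP => j.
have := congr1 (fun c => c ((psiM p)^-1 j)) E.
by rewrite !expv_cat !ffunE permKV => /addnI.
Qed.

Lemma expv_cycle s t : expv [:: s; cop C s t] = expv [:: t; cop C t s].
Proof.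
apply/ffunP => i; rewrite !expv_cons !ffunE -!psiE !(inj_eq perm_inj).
by rewrite addnCA.
Qed.

Lemma psiM_cycle s t : psiM [:: s; cop C s t] = psiM [:: t; cop C t s].
Proof. by apply/permP => i; rewrite !psiM_cons psiM_nil !mulg1 !permM !psiE cop_cycle. Qed.

Lemma sum_indicator (s : S) : \sum_i ((i == s) : nat) = 1%N.
Proof. by rewrite (bigD1 s) //= eqxx big1 // => i /negbTE ->. Qed.

Lemma sum_expv w : \sum_i expv w i = size w.
Proof.
elim: w => [|s w IHw]; first by rewrite big1 // => i _; rewrite ffunE.
under eq_bigr do rewrite expv_cons ffunE.
rewrite big_split /= sum_indicator -IHw.
by rewrite [in RHS](reindex_inj (@perm_inj _ (psi C s))).
Qed.

Lemma size_expv_eq w1 w2 : expv w1 = expv w2 -> size w1 = size w2.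
Proof. by move=> E; rewrite -!sum_expv E. Qed.

Definition tail_expv x c : {ffun S -> nat} :=
  [ffun j => c ((psi C x)^-1 j) - ((psi C x)^-1 j == x)].

Lemma expv_cons_tail x c w :
  0 < c x -> expv w = tail_expv x c -> expv (x :: w) = c.
Proof.
move=> cx_gt0 Ew; apply/ffunP => i; rewrite expv_cons Ew !ffunE permK.
by case: eqP => [->|_]; rewrite ?subn0 // addnC subnK.
Qed.

Lemma sum_tail_expv x c : 0 < c x -> (\sum_i tail_expv x c i).+1 = \sum_i c i.
Proof.
move=> cx_gt0.
rewrite (reindex_inj (@perm_inj _ (psi C x))) -addn1 -(sum_indicator x) -big_split.
apply: eq_bigr => i _; rewrite ffunE permK.
by case: eqP => [->|_]; [exact: subnK | rewrite /= subn0 addn0].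
Qed.

Lemma expv_surj c : exists w, expv w = c.
Proof.
have [n] := ubnP (\sum_i c i); elim: n c => // n IHn c.
case: (pickP (fun x => 0 < c x)) => [x cx_gt0 | c0] sum_lt.
  have [|w Ew] := IHn (tail_expv x c); first by rewrite -ltnS sum_tail_expv.
  by exists (x :: w); apply: expv_cons_tail.
by exists [::]; apply/ffunP => i; apply/eqP; rewrite ffunE eq_sym eqn0Ngt c0.
Qed.

Lemma expv_surj_cons c x : 0 < c x -> exists w, expv (x :: w) = c.
Proof.
by move=> cx_gt0; have [w Ew] := expv_surj (tail_expv x c); exists w; apply: expv_cons_tail.
Qed.

Lemma psiM_expv_eq w1 w2 : expv w1 = expv w2 -> psiM w1 = psiM w2.
Proof.
have [n] := ubnP (size w1); elim: n w1 w2 => // n IHn w1 w2 sz_w1 E.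
have sz_w2 := size_expv_eq E.
case: w1 w2 sz_w1 E sz_w2 => [|s w1] [|t w2] //= /[!ltnS] lt_w1 E [sz_w2].
have lt_w2 : size w2 < n by rewrite -sz_w2.
have [eq_st|neq_st] := eqVneq s t.
  subst t.
  by rewrite !psiM_cons (IHn w1 w2 lt_w1 (@expv_catl_inj [:: s] w1 w2 E)).
have /expv_surj_cons[u Eu] : 0 < expv w1 (cop C s t).
  move/ffunP/(_ t): E; rewrite !expv_cons !ffunE eqxx !psiE eq_sym.
  by rewrite (negbTE neq_st) add0n => ->.
have /expv_surj_cons[u' Eu'] : 0 < expv w2 (cop C t s).
  move/ffunP/(_ s): E; rewrite !expv_cons !ffunE eqxx !psiE.
  by rewrite (negbTE neq_st) add0n => <-.
have Euu' : expv u = expv u'.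
  apply: (@expv_catl_inj [:: s; cop C s t]).
  have Es : expv ([:: s; cop C s t] ++ u) = expv (s :: w1).
    exact: (@expv_cat_eq [:: s] [:: s]).
  have Et : expv ([:: t; cop C t s] ++ u') = expv (t :: w2).
    exact: (@expv_cat_eq [:: t] [:: t]).
  by rewrite Es E -Et; apply: expv_cat_eq; [apply: expv_cycle | apply: psiM_cycle |].
have lt_u : size u < n by rewrite (ltn_trans _ lt_w1) // -(size_expv_eq Eu).
rewrite !psiM_cons (IHn w1 _ lt_w1 (esym Eu)) (IHn w2 _ lt_w2 (esym Eu')).
change (psiM ([:: s; cop C s t] ++ u) = psiM ([:: t; cop C t s] ++ u')).
by rewrite !psiM_cat psiM_cycle (IHn u u' lt_u Euu').
Qed.

Lemma psiM_in_permGroup w : psiM w \in permGroup C.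
Proof.
elim: w => [|s w IHw]; first exact: group1.
by rewrite psiM_cons groupM // mem_gen // imset_f.
Qed.

Lemma permGroup_psiM g : g \in permGroup C -> exists w, psiM w = g.
Proof.
case/gen_prodgP => n [c Hc ->].
apply: (big_ind (fun g => exists w, psiM w = g)) => [|_ _ [u <-] [v <-]|i _].
- by exists [::].
- by exists (u ++ v); rewrite psiM_cat.
- by have /imsetP[s _ ->] := Hc i; exists [:: s]; rewrite psiM_cons mulg1.
Qed.

Fact word_of_subproof c : exists w, expv w == c.
Proof. by have [w <-] := expv_surj c; exists w. Qed.

Definition word_of c : seq S := xchoose (word_of_subproof c).

Lemma expv_word_of c : expv (word_of c) = c.
Proof. exact/eqP/(xchooseP (word_of_subproof c)). Qed.

Definition psiV c := psiM (word_of c).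

Lemma psiV_expv w : psiV (expv w) = psiM w.
Proof. exact/psiM_expv_eq/expv_word_of. Qed.

Lemma psiV_in_permGroup c : psiV c \in permGroup C.
Proof. exact: psiM_in_permGroup. Qed.

Lemma permGroup_psiV g : g \in permGroup C -> exists c, psiV c = g.
Proof. by case/permGroup_psiM => w <-; exists (expv w); rewrite psiV_expv. Qed.

Definition vadd a b : {ffun S -> nat} := [ffun i => a i + b i].

Lemma vaddC : commutative vadd.
Proof. by move=> a b; apply/ffunP => i; rewrite !ffunE addnC. Qed.

Lemma vaddA : associative vadd.
Proof. by move=> a b c; apply/ffunP => i; rewrite !ffunE addnA. Qed.

Lemma vadd0 : left_id [ffun => 0] vadd.
Proof. by move=> a; apply/ffunP => i; rewrite !ffunE. Qed.

Lemma psiV_cocycle a b : psiV (vadd a [ffun i => b (psiV a i)]) = psiV a * psiV b.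
Proof.
rewrite /psiV -psiM_cat; apply: psiM_expv_eq.
by rewrite expv_cat !expv_word_of; apply/ffunP => i; rewrite !ffunE.
Qed.

Lemma psiV_vadd a b : psiV (vadd a b) = psiV a * psiV [ffun i => b ((psiV a)^-1 i)].
Proof. by rewrite -psiV_cocycle; congr psiV; apply/ffunP => i; rewrite !ffunE permK. Qed.

Lemma psiV_vadd_congr a1 a2 b1 b2 :
  psiV a1 = psiV a2 -> psiV b1 = psiV b2 -> psiV (vadd a1 b1) = psiV (vadd a2 b2).
Proof.
have psiV_vaddl a a' b : psiV a = psiV a' -> psiV (vadd a b) = psiV (vadd a' b).
  by rewrite !psiV_vadd => ->.
by move=> /psiV_vaddl Ea /psiV_vaddl Eb; rewrite Ea vaddC Eb vaddC.
Qed.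

Fact vec_of_subproof g : exists c, (g \in permGroup C) ==> (psiV c == g).
Proof.
case: (boolP (g \in permGroup C)) => [/permGroup_psiV[c <-] | _]; last by exists [ffun => 0].
by exists c; rewrite eqxx.
Qed.

Definition vec_of g : {ffun S -> nat} := xchoose (vec_of_subproof g).

Lemma psiV_vec_of g : g \in permGroup C -> psiV (vec_of g) = g.
Proof. by move=> Gg; apply/eqP/(implyP (xchooseP (vec_of_subproof g))). Qed.

Definition addG g h := psiV (vadd (vec_of g) (vec_of h)).

Lemma addG_psiV a b : addG (psiV a) (psiV b) = psiV (vadd a b).
Proof. by apply: psiV_vadd_congr; rewrite psiV_vec_of ?psiV_in_permGroup. Qed.

Lemma addG_psi_compatible : psi_compatible C addG.
Proof. by move=> u v w sum_uvw; rewrite -!psiV_expv sum_uvw addG_psiV. Qed.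

Lemma addG_abelian_group : abelian_group_on (fun g => g \in permGroup C) addG.
Proof.
split.
- by move=> g h _ _; apply: psiV_in_permGroup.
- move=> _ _ _ /permGroup_psiV[a <-] /permGroup_psiV[b <-] /permGroup_psiV[c <-].
  by rewrite !addG_psiV vaddA.
- by move=> _ _ /permGroup_psiV[a <-] /permGroup_psiV[b <-]; rewrite !addG_psiV vaddC.
exists 1; first exact: group1.
split=> _ /permGroup_psiV[a <-].
  by rewrite -psiM_nil -psiV_expv addG_psiV vadd0.
have /permGroup_psiV[b psiVb] : (psiV a)^-1 \in permGroup C.
  by rewrite groupV psiV_in_permGroup.
exists (psiV [ffun i => b (psiV a i)]); first exact: psiV_in_permGroup.
by rewrite addG_psiV psiV_cocycle psiVb mulgV.
Qed.

Lemma addG_unique add' :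
  psi_compatible C add' -> {in permGroup C &, add' =2 addG}.
Proof.
move=> compatible' _ _ /permGroup_psiV[a <-] /permGroup_psiV[b <-].
by rewrite addG_psiV; symmetry; apply: compatible'; rewrite /is_sum !expv_word_of.
Qed.

End CycleSetSum.

Theorem mainTheorem13 (S : finType) (C : cycleSet S) :
  exists add : {perm S} -> {perm S} -> {perm S},
    [/\ psi_compatible C add,
        abelian_group_on (fun g => g \in permGroup C) add
      & forall add' : {perm S} -> {perm S} -> {perm S},
          psi_compatible C add' ->
          forall g h, g \in permGroup C -> h \in permGroup C ->
            add' g h = add g h].
Proof.
exists (addG C); split.
- exact: addG_psi_compatible.
- exact: addG_abelian_group.
- by move=> add' /addG_unique.
Qed.
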